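(* Let $\hat\theta$ be the maximum likelihood estimate of an ordered real sample $x_1 < x_2 < \dots < x_n$ from the Cauchy distribution, and let $F(x;\theta) = \int_{-\infty}^x f(y;\theta)\,dy$ be the Cauchy distribution function. Then: (i) if $n = 3$, $F(x_3;\hat\theta) + F(x_1;\hat\theta) = 2F(x_2;\hat\theta)$; (ii) if $n = 4$, $F(x_3;\hat\theta) - F(x_1;\hat\theta) = F(x_4;\hat\theta) - F(x_2;\hat\theta) = 1/2$.
   Context: $\mathbb{H} = \{\theta\in\mathbb{C}:\Im\theta>0\}$. For $\theta = \mu+i\sigma\in\mathbb{H}$, $f(x;\theta) = \frac{\sigma}{\pi}\frac{1}{(x-\mu)^2+\sigma^2}$ is the Cauchy density. The maximum likelihood estimate $\hat\theta$ is the unique maximizer over $\mathbb{H}$ of $\prod_{j=1}^n f(x_j;\theta)$. *)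

From Stdlib Require Import Reals List.
From Coquelicot Require Import Coquelicot.
Open Scope R_scope.

(* A parameter theta = mu + i sigma in the upper half-plane H is represented
   by the pair of reals (mu, sigma) with 0 < sigma. *)

Definition cauchy_pdf (mu sigma x : R) : R :=
  sigma / PI * / ((x - mu) ^ 2 + sigma ^ 2).

Definition likelihood (xs : list R) (mu sigma : R) : R :=
  fold_right (fun x acc => cauchy_pdf mu sigma x * acc) 1 xs.

Definition is_lik_maximizer (xs : list R) (mu sigma : R) : Prop :=
  0 < sigma /\
  forall mu' sigma', 0 < sigma' -> likelihood xs mu' sigma' <= likelihood xs mu sigma.

Definition is_MLE (xs : list R) (mu sigma : R) : Prop :=
  is_lik_maximizer xs mu sigma /\
  forall mu' sigma', is_lik_maximizer xs mu' sigma' -> mu' = mu /\ sigma' = sigma.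

Definition cauchy_cdf (mu sigma x : R) : R :=
  RInt_gen (cauchy_pdf mu sigma) (Rbar_locally m_infty) (at_point x).

From Stdlib Require Import Reals List Lra.
From Coquelicot Require Import Coquelicot.
Import ListNotations.
Open Scope R_scope.

(* Writing u = (x - mu) / sigma and theta = 2 atan u, the Cauchy distribution
   function is (theta + PI) / (2 PI), and the two likelihood equations
   (derivatives in mu and in sigma) say that sum_j sin theta_j = 0 and
   sum_j cos theta_j = 0, i.e. that the unit vectors e^(i theta_j) sum to 0.
   Three unit vectors with zero sum are spaced 2 PI / 3 apart; four split into
   two antipodal pairs, and since the angles increase with x inside an arc of
   length 2 PI, theta_3 = theta_1 + PI and theta_4 = theta_2 + PI. *)

Lemma cos_eq_0_2PI x y : 0 < x < 2 * PI -> 0 < y < 2 * PI ->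
  cos x = cos y -> x = y \/ x + y = 2 * PI.
Proof.
  intros Hx Hy E.
  assert (Z : sin ((x - y) / 2) * sin ((x + y) / 2) = 0).
  { pose proof (form2 x y) as F. lra. }
  apply Rmult_integral in Z as [Z | Z].
  - left.
    destruct (Rtotal_order x y) as [Hlt | [Heq | Hgt]]; auto.
    + pose proof (sin_lt_0_var ((x - y) / 2)). lra.
    + pose proof (sin_gt_0 ((x - y) / 2)). lra.
  - right. apply sin_eq_O_2PI_0 in Z; lra.
Qed.

Lemma norm2_sum_unit a b :
  (cos a + cos b) ^ 2 + (sin a + sin b) ^ 2 = 2 + 2 * cos (b - a).
Proof.
  rewrite cos_minus. pose proof (sin2_cos2 a). pose proof (sin2_cos2 b).
  unfold Rsqr in *. nra.
Qed.

Lemma cos_diff_opposite a b c d :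
  cos a + cos b + cos c + cos d = 0 -> sin a + sin b + sin c + sin d = 0 ->
  cos (b - a) = cos (d - c).
Proof.
  intros Hc Hs.
  pose proof (norm2_sum_unit a b). pose proof (norm2_sum_unit c d).
  replace (cos a + cos b) with (- (cos c + cos d)) in * by lra.
  replace (sin a + sin b) with (- (sin c + sin d)) in * by lra.
  nra.
Qed.

Lemma unit3_sum0_cos_diff a b c :
  cos a + cos b + cos c = 0 -> sin a + sin b + sin c = 0 -> cos (b - a) = - 1 / 2.
Proof.
  intros Hc Hs.
  pose proof (norm2_sum_unit a b) as N. pose proof (sin2_cos2 c).
  replace (cos a + cos b) with (- cos c) in N by lra.
  replace (sin a + sin b) with (- sin c) in N by lra.
  unfold Rsqr in *. nra.
Qed.

Lemma unit3_sum0_equispaced a b c : a < b -> b < c -> c - a < 2 * PI ->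
  cos a + cos b + cos c = 0 -> sin a + sin b + sin c = 0 ->
  b - a = 2 * PI / 3 /\ c - b = 2 * PI / 3.
Proof.
  intros Hab Hbc Hca Hc Hs. pose proof PI_RGT_0.
  assert (Eab : cos (b - a) = cos (2 * (PI / 3))).
  { rewrite cos_2PI3. now apply (unit3_sum0_cos_diff a b c). }
  assert (Ebc : cos (c - b) = cos (2 * (PI / 3))).
  { rewrite cos_2PI3. apply (unit3_sum0_cos_diff b c a); lra. }
  apply cos_eq_0_2PI in Eab; [| lra | lra].
  apply cos_eq_0_2PI in Ebc; lra.
Qed.

Lemma unit4_sum0_antipodal a b c d : a < b -> b < c -> c < d -> d - a < 2 * PI ->
  cos a + cos b + cos c + cos d = 0 -> sin a + sin b + sin c + sin d = 0 ->
  c - a = PI /\ d - b = PI.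
Proof.
  intros Hab Hbc Hcd Hda Hc Hs.
  (* With gaps p = b - a, q = c - b, r = d - c: first p = r, then
     cos (p + q + r) = cos q forces p + q + r + q = 2 PI. *)
  assert (Eout : b - a = d - c).
  { apply cos_diff_opposite in Hs; auto.
    apply cos_eq_0_2PI in Hs; lra. }
  assert (Ein : cos (d - a) = cos (c - b)).
  { apply (cos_diff_opposite a d b c); lra. }
  apply cos_eq_0_2PI in Ein; lra.
Qed.

Lemma cauchy_den_pos mu sigma x : 0 < sigma -> 0 < (x - mu) ^ 2 + sigma ^ 2.
Proof. intros Hs. pose proof (pow2_ge_0 (x - mu)). nra. Qed.

Definition cauchy_angle (mu sigma x : R) : R := 2 * atan ((x - mu) / sigma).

Lemma cauchy_angle_bound mu sigma x : - PI < cauchy_angle mu sigma x < PI.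
Proof. unfold cauchy_angle. pose proof (atan_bound ((x - mu) / sigma)). lra. Qed.

Lemma cauchy_angle_increasing mu sigma x y : 0 < sigma -> x < y ->
  cauchy_angle mu sigma x < cauchy_angle mu sigma y.
Proof.
  intros Hs Hxy. unfold cauchy_angle.
  enough (atan ((x - mu) / sigma) < atan ((y - mu) / sigma)) by lra.
  apply atan_increasing, Rmult_lt_compat_r; [apply Rinv_0_lt_compat |]; lra.
Qed.

Lemma cos_2atan u : cos (2 * atan u) = (1 - u ^ 2) / (1 + u ^ 2).
Proof.
  assert (Hu : 0 < 1 + u²) by (unfold Rsqr; nra).
  rewrite cos_2a, cos_atan, sin_atan.
  pose proof (sqrt_sqrt _ (Rlt_le _ _ Hu)). pose proof (sqrt_lt_R0 _ Hu).
  unfold Rsqr in *. field_simplify; [| lra | nra].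
  replace (sqrt (1 + u * u) ^ 2) with (1 + u * u) by nra. field. nra.
Qed.

Lemma sin_2atan u : sin (2 * atan u) = 2 * u / (1 + u ^ 2).
Proof.
  assert (Hu : 0 < 1 + u²) by (unfold Rsqr; nra).
  rewrite sin_2a, cos_atan, sin_atan.
  pose proof (sqrt_sqrt _ (Rlt_le _ _ Hu)). pose proof (sqrt_lt_R0 _ Hu).
  unfold Rsqr in *. field_simplify; [| lra | nra].
  replace (sqrt (1 + u * u) ^ 2) with (1 + u * u) by nra. field. nra.
Qed.

Lemma is_derive_cauchy_angle mu sigma x : 0 < sigma ->
  is_derive (cauchy_angle mu sigma) x (2 * PI * cauchy_pdf mu sigma x).
Proof.
  intros Hs. unfold cauchy_angle, cauchy_pdf. pose proof PI_RGT_0.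
  pose proof (cauchy_den_pos mu sigma x Hs) as Hd.
  auto_derive; [lra |].
  unfold Rsqr. field. split; [apply Rgt_not_eq; exact Hd | lra].
Qed.

Lemma atan_lim_m_infty : filterlim atan (Rbar_locally m_infty) (locally (- PI / 2)).
Proof.
  intros P [eps HP]. pose proof PI_RGT_0.
  set (e := Rmin eps PI).
  assert (He : 0 < e <= eps /\ e <= PI)
    by (split; [split; [apply Rmin_pos; [apply cond_pos | lra] | apply Rmin_l] | apply Rmin_r]).
  exists (tan (- PI / 2 + e / 2)). intros x Hx. apply HP.
  assert (atan x < - PI / 2 + e / 2).
  { rewrite <- (atan_tan (- PI / 2 + e / 2)) by lra. now apply atan_increasing. }
  pose proof (atan_bound x).
  change (Rabs (atan x - - PI / 2) < eps). rewrite Rabs_right; lra.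
Qed.

Lemma cauchy_angle_lim_m_infty mu sigma : 0 < sigma ->
  filterlim (cauchy_angle mu sigma) (Rbar_locally m_infty) (locally (- PI)).
Proof.
  intros Hs. unfold cauchy_angle.
  replace (- PI) with (2 * (- PI / 2)) by field.
  apply (filterlim_comp _ _ _ (fun x => atan ((x - mu) / sigma)) (fun a => 2 * a)
           _ (locally (- PI / 2))).
  - apply (filterlim_comp _ _ _ (fun x => (x - mu) / sigma) atan _ (Rbar_locally m_infty)).
    + intros P [M HM]. exists (mu + sigma * M). intros x Hx. apply HM.
      apply (Rmult_lt_reg_r sigma); auto. unfold Rdiv. rewrite Rmult_assoc, Rinv_l; lra.
    + exact atan_lim_m_infty.
  - apply (continuous_mult (fun _ => 2) (fun a => a)).
    + apply continuous_const.
    + apply continuous_id.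
Qed.

Lemma continuous_cauchy_pdf mu sigma x : 0 < sigma -> continuous (cauchy_pdf mu sigma) x.
Proof.
  intros Hs. apply (ex_derive_continuous (V := R_NormedModule)).
  unfold cauchy_pdf. auto_derive.
  apply Rgt_not_eq, cauchy_den_pos, Hs.
Qed.

Lemma cauchy_cdf_angle mu sigma x : 0 < sigma ->
  cauchy_cdf mu sigma x = (cauchy_angle mu sigma x + PI) / (2 * PI).
Proof.
  intros Hs. pose proof PI_RGT_0.
  set (F t := (cauchy_angle mu sigma t + PI) / (2 * PI)).
  change (cauchy_cdf mu sigma x = F x).
  assert (HF : forall t, is_derive F t (cauchy_pdf mu sigma t)).
  { intros t.
    replace (cauchy_pdf mu sigma t) with (2 * PI * cauchy_pdf mu sigma t * / (2 * PI))
      by (field; lra).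
    apply (is_derive_comp (fun a => (a + PI) / (2 * PI)) (cauchy_angle mu sigma)).
    - auto_derive; [exact I | field; lra].
    - now apply is_derive_cauchy_angle. }
  assert (HF0 : filterlim F (Rbar_locally m_infty) (locally 0)).
  { replace 0 with ((- PI + PI) / (2 * PI)) by (field; lra).
    apply (filterlim_comp _ _ _ (cauchy_angle mu sigma) (fun a => (a + PI) / (2 * PI))
             _ (locally (- PI))).
    - now apply cauchy_angle_lim_m_infty.
    - apply (ex_derive_continuous (V := R_NormedModule) (fun a => (a + PI) / (2 * PI))).
      auto_derive. exact I. }
  unfold cauchy_cdf. apply is_RInt_gen_unique.
  replace (F x) with (F x - 0) by ring.
  apply (is_RInt_gen_ext (Derive F)).
  - apply filter_forall. intros. now apply is_derive_unique.
  - apply is_RInt_gen_Derive; auto.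
    + apply filter_forall. intros. eexists. apply HF.
    + apply filter_forall. intros. apply continuous_ext with (cauchy_pdf mu sigma).
      * intros t. symmetry. now apply is_derive_unique.
      * now apply continuous_cauchy_pdf.
    + intros P HP. exact (locally_singleton _ _ HP).
Qed.

Definition sum_over (xs : list R) (h : R -> R) : R :=
  fold_right (fun x acc => h x + acc) 0 xs.

Lemma sum_over_scal xs c h : sum_over xs (fun x => c * h x) = c * sum_over xs h.
Proof.
  induction xs as [| x xs IH]; simpl; [ring |].
  change (c * h x + sum_over xs (fun x => c * h x) = c * (h x + sum_over xs h)).
  rewrite IH. ring.
Qed.

Lemma is_derive_fold_prod (f : R -> R -> R) (g : R -> R) xs t :
  (forall x, is_derive (fun s => f s x) t (f t x * g x)) ->
  is_derive (fun s => fold_right (fun x acc => f s x * acc) 1 xs) t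
    (fold_right (fun x acc => f t x * acc) 1 xs * sum_over xs g).
Proof.
  intros Hf. induction xs as [| x xs IH]; simpl.
  - replace (1 * 0) with 0 by ring.
    apply (is_derive_const (K := R_AbsRing) (V := R_NormedModule)).
  - set (P := fold_right (fun x acc => f t x * acc) 1 xs) in *.
    replace (f t x * P * (g x + sum_over xs g))
      with (plus (mult (f t x * g x) P) (mult (f t x) (P * sum_over xs g)))
      by (unfold plus, mult; simpl; ring).
    apply (is_derive_mult (fun s => f s x)); auto. exact Rmult_comm.
Qed.

Lemma is_derive_cauchy_pdf_loc mu sigma x : 0 < sigma ->
  is_derive (fun m => cauchy_pdf m sigma x) mu
    (cauchy_pdf mu sigma x * (/ sigma * sin (cauchy_angle mu sigma x))).
Proof.
  intros Hs. pose proof PI_RGT_0.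
  pose proof (cauchy_den_pos mu sigma x Hs) as Hd.
  unfold cauchy_angle. rewrite sin_2atan. unfold cauchy_pdf.
  auto_derive; [apply Rgt_not_eq; exact Hd |].
  field. repeat split; lra.
Qed.

Lemma is_derive_cauchy_pdf_scale mu sigma x : 0 < sigma ->
  is_derive (fun s => cauchy_pdf mu s x) sigma
    (cauchy_pdf mu sigma x * (- / sigma * cos (cauchy_angle mu sigma x))).
Proof.
  intros Hs. pose proof PI_RGT_0.
  pose proof (cauchy_den_pos mu sigma x Hs) as Hd.
  unfold cauchy_angle. rewrite cos_2atan. unfold cauchy_pdf.
  auto_derive; [apply Rgt_not_eq; exact Hd |].
  field. repeat split; lra.
Qed.

Lemma likelihood_pos xs mu sigma : 0 < sigma -> 0 < likelihood xs mu sigma.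
Proof.
  intros Hs. pose proof PI_RGT_0.
  induction xs as [| x xs IH]; simpl; [lra |].
  apply Rmult_lt_0_compat; auto. unfold cauchy_pdf.
  apply Rmult_lt_0_compat; [apply Rdiv_lt_0_compat; auto |].
  apply Rinv_0_lt_compat, cauchy_den_pos, Hs.
Qed.

Lemma is_derive_local_max (g : R -> R) a b t l : a < t < b ->
  is_derive g t l -> (forall y, a < y < b -> g y <= g t) -> l = 0.
Proof.
  intros Ht Hd Hmax. apply is_derive_Reals in Hd.
  apply (deriv_maximum g a b t (exist _ l Hd)); try lra.
  intros y Hay Hyb. now apply Hmax.
Qed.

Lemma lik_maximizer_balanced xs mu sigma : is_lik_maximizer xs mu sigma ->
  sum_over xs (fun x => cos (cauchy_angle mu sigma x)) = 0 /\
  sum_over xs (fun x => sin (cauchy_angle mu sigma x)) = 0.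
Proof.
  intros [Hs Hmax].
  assert (Cancel : forall c S, c <> 0 -> likelihood xs mu sigma * c * S = 0 -> S = 0).
  { intros c S Hc E. pose proof (likelihood_pos xs mu sigma Hs).
    apply Rmult_integral in E as [E | E]; [| exact E].
    apply Rmult_integral in E as [E | E]; lra. }
  assert (Hinv : / sigma <> 0) by (apply Rinv_neq_0_compat; lra).
  split.
  - apply (Cancel (- / sigma)); [lra |].
    rewrite Rmult_assoc, <- sum_over_scal.
    apply (is_derive_local_max (fun s => likelihood xs mu s) 0 (2 * sigma) sigma); [lra | |].
    + apply is_derive_fold_prod. intros x. now apply is_derive_cauchy_pdf_scale.
    + intros s Hs'. apply Hmax. lra.
  - apply (Cancel (/ sigma)); [exact Hinv |].
    rewrite Rmult_assoc, <- sum_over_scal.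
    apply (is_derive_local_max (fun m => likelihood xs m sigma) (mu - 1) (mu + 1) mu); [lra | |].
    + apply is_derive_fold_prod. intros x. now apply is_derive_cauchy_pdf_loc.
    + intros m _. now apply Hmax.
Qed.

Theorem mainTheorem12 :
  (forall (x1 x2 x3 mu sigma : R),
      x1 < x2 -> x2 < x3 ->
      is_MLE [x1; x2; x3] mu sigma ->
      cauchy_cdf mu sigma x3 + cauchy_cdf mu sigma x1 = 2 * cauchy_cdf mu sigma x2)
  /\
  (forall (x1 x2 x3 x4 mu sigma : R),
      x1 < x2 -> x2 < x3 -> x3 < x4 ->
      is_MLE [x1; x2; x3; x4] mu sigma ->
      cauchy_cdf mu sigma x3 - cauchy_cdf mu sigma x1 = 1 / 2 /\
      cauchy_cdf mu sigma x4 - cauchy_cdf mu sigma x2 = 1 / 2).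
Proof.
  pose proof PI_RGT_0.
  split.
  - intros x1 x2 x3 mu sigma H12 H23 [Hmax _].
    pose proof (proj1 Hmax) as Hs.
    destruct (lik_maximizer_balanced _ _ _ Hmax) as [Hcos Hsin].
    cbn [sum_over fold_right] in Hcos, Hsin.
    pose proof (cauchy_angle_bound mu sigma x1). pose proof (cauchy_angle_bound mu sigma x3).
    destruct (unit3_sum0_equispaced (cauchy_angle mu sigma x1) (cauchy_angle mu sigma x2)
                (cauchy_angle mu sigma x3)) as [E12 E23];
      auto using cauchy_angle_increasing; try lra.
    rewrite !cauchy_cdf_angle by exact Hs.
    replace (cauchy_angle mu sigma x3)
      with (2 * cauchy_angle mu sigma x2 - cauchy_angle mu sigma x1) by lra.
    field. lra.
  - intros x1 x2 x3 x4 mu sigma H12 H23 H34 [Hmax _].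
    pose proof (proj1 Hmax) as Hs.
    destruct (lik_maximizer_balanced _ _ _ Hmax) as [Hcos Hsin].
    cbn [sum_over fold_right] in Hcos, Hsin.
    pose proof (cauchy_angle_bound mu sigma x1). pose proof (cauchy_angle_bound mu sigma x4).
    destruct (unit4_sum0_antipodal (cauchy_angle mu sigma x1) (cauchy_angle mu sigma x2)
                (cauchy_angle mu sigma x3) (cauchy_angle mu sigma x4)) as [E13 E24];
      auto using cauchy_angle_increasing; try lra.
    rewrite !cauchy_cdf_angle by exact Hs.
    replace (cauchy_angle mu sigma x3) with (cauchy_angle mu sigma x1 + PI) by lra.
    replace (cauchy_angle mu sigma x4) with (cauchy_angle mu sigma x2 + PI) by lra.
    split; field; lra.
Qed.
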